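(* There exists an absolute constant $\varepsilon_0>0$ such that for the gossip USD, every $n$ and every $t\ge1$: if $\beta_{t-1}\ge\frac12-\varepsilon_0$, $\psi_{t-1}\le\varepsilon_0$ and $\gamma_{t-1}\le\varepsilon_0$, then $$\mathbb E_{t-1}[\widetilde\gamma_t]\ge\widetilde\gamma_{t-1}+\frac{1}{12n}.$$
   Context: Vertex set $V$, $|V|=n$; opinions in $\Sigma=[k]\cup\{\bot\}$ ($\bot$ = undecided). USD update rule: $\mathsf{update}(\sigma_1,\sigma_2)=\bot$ if $\sigma_1,\sigma_2\in[k]$ and $\sigma_1\ne\sigma_2$; $=\sigma_2$ if $\sigma_1=\bot$; $=\sigma_1$ otherwise. Gossip USD: given $\mathrm{opn}_t\in\Sigma^V$, every $u\in V$ independently picks $v$ uniformly from $V$ and sets $\mathrm{opn}_{t+1}(u)=\mathsf{update}(\mathrm{opn}_t(u),\mathrm{opn}_t(v))$. Notation: $\alpha_t(i)=|\{u:\mathrm{opn}_t(u)=i\}|/n$, $\beta_t=\sum_{i\in[k]}\alpha_t(i)$, $\gamma_t=\sum_{i\in[k]}\alpha_t(i)^2$, $\psi_t=\beta_t(2\beta_t-1)-\gamma_t$, and $\widetilde\gamma_t=\gamma_t/\beta_t^2$ if $\beta_t>0$, $\widetilde\gamma_t=0$ if $\beta_t=0$. $\mathbb E_{t-1}$ is conditional expectation given the natural filtration $\mathcal F_{t-1}$. *)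

From HB Require Import structures.
From mathcomp Require Import all_boot all_order all_algebra.
Set Implicit Arguments. Unset Strict Implicit. Unset Printing Implicit Defensive.
Import Order.TTheory GRing.Theory Num.Theory.
Local Open Scope ring_scope.

(* Opinions: Sigma = [k] ∪ {⊥}, encoded as option 'I_k with None = ⊥.
   Vertex set V = 'I_n. A configuration is opn : {ffun 'I_n -> option 'I_k}. *)

Definition usd_update (k : nat) (s1 s2 : option 'I_k) : option 'I_k :=
  match s1, s2 with
  | Some i, Some j => if i == j then s1 else None
  | None, _ => s2
  | Some _, None => s1
  end.

Section USD.
Variables (R : realFieldType) (n k : nat).
Implicit Types (c : {ffun 'I_n -> option 'I_k}).

Definition alpha c (i : 'I_k) : R := (#|[set u | c u == Some i]|)%:R / n%:R.
Definition beta c : R := \sum_(i < k) alpha c i.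
Definition gamma c : R := \sum_(i < k) alpha c i ^+ 2.
Definition psi c : R := beta c * (2 * beta c - 1) - gamma c.
Definition gtilde c : R := if beta c == 0 then 0 else gamma c / beta c ^+ 2.

Definition usd_step c (f : {ffun 'I_n -> 'I_n}) : {ffun 'I_n -> option 'I_k} :=
  [ffun u => usd_update (c u) (c (f u))].

(* E_{t-1}[ g(opn_t) ] when opn_{t-1} = c: each u picks v independently and
   uniformly, i.e. the choice function f is uniform over all n^n functions. *)
Definition usd_expect c (g : {ffun 'I_n -> option 'I_k} -> R) : R :=
  \sum_(f : {ffun 'I_n -> 'I_n}) g (usd_step c f) / (n ^ n)%:R.
End USD.

From HB Require Import structures.
From mathcomp Require Import all_boot all_order all_algebra.
From mathcomp Require Import ring lra.
Import Order.TTheory GRing.Theory Num.Theory.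
Local Open Scope ring_scope.
Set Implicit Arguments. Unset Strict Implicit. Unset Printing Implicit Defensive.

(* Write N_i for the number of vertices holding opinion i after one step, B = \sum_i N_i and
   G = \sum_i N_i^2, so that gtilde_t = G / B^2.  The tangent of x |-> x^-2 at y = E[B] gives
   G / B^2 >= G (3 / y^2 - 2 B / y^3), and since the vertices choose independently,
   E[G B] <= E[G] (y + 2); hence E[gtilde_t] >= E[G] (y - 4) / y^3.  Both E[G] and y are
   explicit in the fractions alpha_i.  When beta is close to 1/2 and gamma, psi are small, the
   leading term of this bound dominates gtilde_{t-1} by Cauchy-Schwarz inequalities between the
   moments of alpha, and the next term, of order 1/n, exceeds 1/(12 n). *)

Section UniformMap.
Variables (R : realFieldType) (aT rT : finType).
Hypothesis rT_gt0 : (0 < #|rT|)%N.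
Implicit Types (X Y : {ffun aT -> rT} -> R) (F H K : rT -> R).

Definition mean X := \sum_f X f / #|{ffun aT -> rT}|%:R.
Definition avg F := (\sum_v F v) / #|rT|%:R.

Lemma eq_mean X Y : X =1 Y -> mean X = mean Y.
Proof. by move=> eqXY; apply: eq_bigr => f _; rewrite eqXY. Qed.

Lemma eq_avg F H : F =1 H -> avg F = avg H.
Proof. by move=> eqFH; congr (_ / _); apply: eq_bigr => v _; rewrite eqFH. Qed.

Lemma mean_sum (I : finType) (X : I -> {ffun aT -> rT} -> R) :
  mean (fun f => \sum_i X i f) = \sum_i mean (X i).
Proof. by rewrite /mean exchange_big; apply: eq_bigr => i _; rewrite mulr_suml. Qed.

Lemma meanZ x X : mean (fun f => x * X f) = x * mean X.
Proof. by rewrite /mean mulr_sumr; apply: eq_bigr => f _; rewrite mulrA. Qed.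

Lemma meanB X Y : mean (fun f => X f - Y f) = mean X - mean Y.
Proof. by rewrite /mean -sumrB; apply: eq_bigr => f _; rewrite mulrBl. Qed.

Lemma ler_mean X Y : (forall f, X f <= Y f) -> mean X <= mean Y.
Proof. by move=> leXY; apply: ler_sum => f _; rewrite ler_wpM2r ?invr_ge0 ?ler0n. Qed.

Lemma mean_ge0 X : (forall f, 0 <= X f) -> 0 <= mean X.
Proof. by move=> X_ge0; apply: sumr_ge0 => f _; rewrite mulr_ge0 ?invr_ge0. Qed.

Lemma mean_prod (phi : aT -> rT -> R) :
  mean (fun f => \prod_x phi x (f x)) = \prod_x avg (phi x).
Proof.
rewrite /mean /avg -mulr_suml -bigA_distr_bigA big_split /= prodr_const.
by rewrite card_ffun natrX exprVn.
Qed.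

Let at_pt (a : aT) F x v := if x == a then F v else 1.

Let prod_at_pt a F f : \prod_x at_pt a F x (f x) = F (f a).
Proof. by rewrite (bigD1 a) //= /at_pt eqxx big1 ?mulr1 // => x /negbTE ->. Qed.

Let avg1 : avg (fun=> 1) = 1.
Proof. by rewrite /avg sumr_const divff // pnatr_eq0 -lt0n. Qed.

Lemma mean_point a F : mean (fun f => F (f a)) = avg F.
Proof.
rewrite (eq_mean (Y := fun f => \prod_x at_pt a F x (f x))) => [|f]; last by rewrite prod_at_pt.
rewrite mean_prod (bigD1 a) //= big1 ?mulr1 => [|x /negbTE xa].
  by apply: eq_avg => v; rewrite /at_pt eqxx.
by rewrite -avg1; apply: eq_avg => v; rewrite /at_pt xa.
Qed.

Lemma mean_indep a b d F H K : d != a -> d != b ->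
  mean (fun f => F (f a) * H (f b) * K (f d)) = mean (fun f => F (f a) * H (f b)) * avg K.
Proof.
move=> da db.
pose phi K' x v := at_pt a F x v * at_pt b H x v * at_pt d K' x v.
have meanE K' : mean (fun f => F (f a) * H (f b) * K' (f d)) = \prod_x avg (phi K' x).
  by rewrite -mean_prod; apply: eq_mean => f; rewrite !big_split /= !prod_at_pt.
have phi_d K' : avg (phi K' d) = avg K'.
  by apply: eq_avg => v; rewrite /phi /at_pt eqxx (negbTE da) (negbTE db) !mul1r.
have phi_off K' x : x != d -> avg (phi K' x) = avg (phi (fun=> 1) x).
  by move=> xd; apply: eq_avg => v; rewrite /phi /at_pt (negbTE xd).
have -> : mean (fun f => F (f a) * H (f b)) = \prod_x avg (phi (fun=> 1) x).
  by rewrite -meanE; apply: eq_mean => f /=; rewrite mulr1.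
rewrite meanE (bigD1 d) //= [in RHS](bigD1 d) //= !phi_d avg1 mul1r mulrC.
by congr (_ * _); apply: eq_bigr => x xd; rewrite phi_off.
Qed.

Lemma mean_indep2 a b F H : a != b ->
  mean (fun f => F (f a) * H (f b)) = avg F * avg H.
Proof.
move=> ab; have ba : b != a by rewrite eq_sym.
have := mean_indep F (fun=> 1) H ba ba.
rewrite (eq_mean (fun f => mulr1 (F (f a)))) mean_point => <-.
by apply: eq_mean => f /=; rewrite mulr1.
Qed.

End UniformMap.

Section Sums.
Variable R : realFieldType.

Lemma card_natr (T : finType) (P : pred T) :
  #|[set x | P x]|%:R = \sum_x (P x)%:R :> R.
Proof. by rewrite -sum1dep_card natr_sum big_mkcond; apply: eq_bigr => x _; case: (P x). Qed.

Lemma sumr_delta (T : finType) (u : T) (g : T -> R) : \sum_x (x == u)%:R * g x = g u.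
Proof. by rewrite (bigD1 u) //= eqxx mul1r big1 ?addr0 // => x /negbTE ->; rewrite mul0r. Qed.

Lemma CauchySchwarz_wsum (I : finType) (w x : I -> R) : (forall i, 0 <= w i) ->
  (\sum_i w i * x i) ^+ 2 <= (\sum_i w i) * (\sum_i w i * x i ^+ 2).
Proof.
move=> w_ge0.
have Lagrange : \sum_i \sum_j w i * w j * (x i - x j) ^+ 2 =
   2 * ((\sum_i w i) * (\sum_i w i * x i ^+ 2)) - 2 * (\sum_i w i * x i) ^+ 2.
  rewrite (eq_bigr (fun i => w i * x i ^+ 2 * \sum_j w j - 2 * (w i * x i) * \sum_j w j * x j
                              + w i * \sum_j w j * x j ^+ 2)); last first.
    by move=> i _; rewrite !mulr_sumr -sumrB -big_split; apply: eq_bigr => j _ /=; ring.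
  by rewrite big_split /= sumrB -!mulr_suml -mulr_sumr; ring.
have : 0 <= \sum_i \sum_j w i * w j * (x i - x j) ^+ 2.
  by do 2![apply: sumr_ge0 => ? _]; rewrite mulr_ge0 ?sqr_ge0 ?mulr_ge0.
by rewrite Lagrange; lra.
Qed.

Lemma moment_CauchySchwarz (I : finType) (a : I -> R) m : (forall i, 0 <= a i) ->
  (\sum_i a i ^+ m.+1) ^+ 2 <= (\sum_i a i ^+ m) * (\sum_i a i ^+ m.+2).
Proof.
move=> a_ge0; have := CauchySchwarz_wsum a (fun i => exprn_ge0 m (a_ge0 i)).
have -> : \sum_i a i ^+ m * a i = \sum_i a i ^+ m.+1 by apply: eq_bigr => i _; rewrite exprSr.
by have -> : \sum_i a i ^+ m * a i ^+ 2 = \sum_i a i ^+ m.+2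
  by apply: eq_bigr => i _; rewrite -exprD addn2.
Qed.

Lemma moment_le (I : finType) (a : I -> R) m : (forall i, 0 <= a i <= 1) ->
  \sum_i a i ^+ m.+1 <= \sum_i a i ^+ m.
Proof.
move=> a01; apply: ler_sum => i _; have /andP[a_ge0 a_le1] := a01 i.
by rewrite exprSr ler_piMr ?exprn_ge0.
Qed.

Lemma invr_sqr_tangent (y x : R) : 0 < y -> 0 < x -> 3 / y ^+ 2 - 2 * x / y ^+ 3 <= (x ^+ 2)^-1.
Proof.
move=> y_gt0 x_gt0; rewrite -subr_ge0.
have -> : (x ^+ 2)^-1 - (3 / y ^+ 2 - 2 * x / y ^+ 3) = (y - x) ^+ 2 * (y + 2 * x) / (x ^+ 2 * y ^+ 3).
  by field; rewrite !gt_eqF.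
apply: divr_ge0; first by rewrite mulr_ge0 ?sqr_ge0 //; lra.
by rewrite mulr_ge0 ?exprn_ge0 ?ltW.
Qed.

End Sums.

Section DriftArithmetic.
Variable R : realFieldType.
Local Notation eps := (1 / 10 ^+ 3).

(* For a_i >= 0 with moments be, ga, p3, p4 and weights w_i = t + a_i this reads
   (\sum a_i^2) (\sum a_i w_i)^2 <= (\sum a_i^2 w_i^2) (\sum a_i)^2. *)
Lemma Chebyshev_moments (t be ga p3 p4 : R) : 0 <= t -> 0 < be -> 0 < ga ->
  ga ^+ 2 <= be * p3 -> p3 ^+ 2 <= ga * p4 ->
  ga * (t * be + ga) ^+ 2 <= (t ^+ 2 * ga + 2 * t * p3 + p4) * be ^+ 2.
Proof.
move=> t_ge0 be_gt0 ga_gt0 ga_CS p3_CS.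
have mid : t * be * ga ^+ 2 <= t * be * (be * p3).
  by apply: ler_wpM2l => //; apply: mulr_ge0 => //; exact: ltW.
have top : ga ^+ 3 <= be ^+ 2 * p4.
  have sq : ga ^+ 2 * ga ^+ 2 <= be * p3 * (be * p3) by apply: ler_pM; rewrite ?sqr_ge0.
  have p3_sq : be ^+ 2 * p3 ^+ 2 <= be ^+ 2 * (ga * p4) by rewrite ler_wpM2l ?sqr_ge0.
  rewrite -(ler_pM2l ga_gt0).
  have -> : ga * ga ^+ 3 = ga ^+ 2 * ga ^+ 2 by ring.
  have -> : ga * (be ^+ 2 * p4) = be ^+ 2 * (ga * p4) by ring.
  by apply: le_trans sq _; have -> : be * p3 * (be * p3) = be ^+ 2 * p3 ^+ 2 by ring.
have -> : ga * (t * be + ga) ^+ 2 = ga * (t * be) ^+ 2 + 2 * (t * be * ga ^+ 2) + ga ^+ 3 by ring.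
have -> : (t ^+ 2 * ga + 2 * t * p3 + p4) * be ^+ 2 =
          ga * (t * be) ^+ 2 + 2 * (t * be * (be * p3)) + be ^+ 2 * p4 by ring.
lra.
Qed.

Lemma beta_le_of_psi (be ga : R) :
  be * (2 * be - 1) - ga <= eps -> ga <= eps -> be <= 1 / 2 + 3 * eps.
Proof.
move=> psi_le ga_le; have [//|be_gt] := lerP be (1 / 2 + 3 * eps).
have : (1 / 2 + 3 * eps) * (6 * eps) < be * (2 * be - 1) by apply: ltr_pM; lra.
lra.
Qed.

Lemma drift_correction_ge (N b0 M C : R) : 400 <= N ->
  1 / 2 - eps <= b0 <= 1 / 2 + eps -> 0 <= M <= 9 * eps -> 1 / 4 - 4 * eps <= C <= 1 ->
  1 / (12 * N) <= (C * N * b0 - 4 * N * M - 4 * C) / (N ^+ 2 * b0 ^+ 3).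
Proof.
move=> N_ge /andP[b0_ge b0_le] /andP[M_ge0 M_le] /andP[C_ge C_le].
rewrite ler_pdivrMr ?mulr_gt0 ?exprn_gt0 //; try lra.
rewrite mulrAC ler_pdivlMr ?mulr_gt0 //; try lra.
have Cb0_ge : (1 / 4 - 4 * eps) * (1 / 2 - eps) <= C * b0 by apply: ler_pM; lra.
have b0_sq : b0 * b0 <= 6 / 10 * (6 / 10) by apply: ler_pM; lra.
have b0_cube : b0 * b0 * b0 <= 6 / 10 * (6 / 10) * (6 / 10) by apply: ler_pM; rewrite ?mulr_ge0; lra.
have lead : 400 * (1 / 2) <= N * (12 * (C * b0) - 48 * M - b0 * b0 * b0) by apply: ler_pM; lra.
rewrite -subr_ge0.
have -> : (C * N * b0 - 4 * N * M - 4 * C) * (12 * N) - 1 * (N ^+ 2 * b0 ^+ 3) =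
          N * (N * (12 * (C * b0) - 48 * M - b0 * b0 * b0) - 48 * C) by ring.
by apply: mulr_ge0; lra.
Qed.

Section Regime.
Variables (N be ga p3 p4 : R).

(* With w_i = a_i (t + a_i), where the a_i have moments be, ga, p3, p4:
   b0 = \sum w_i, M = \sum w_i^2 and C = \sum w_i (be - a_i). *)
Let t := 2 * (1 - be).
Let b0 := t * be + ga.
Let M := t ^+ 2 * ga + 2 * t * p3 + p4.
Let C := b0 * be - t * ga - p3.

Let b0_bounds : 1 / 2 - eps <= be <= 1 / 2 + 3 * eps -> 0 <= ga <= eps ->
  1 / 2 - eps <= b0 <= 1 / 2 + eps.
Proof.
move=> /andP[be_ge be_le] /andP[ga_ge0 ga_le].
have : 0 <= (be - 1 / 2 + 3 * eps) * (3 * eps - (be - 1 / 2)) by apply: mulr_ge0; lra.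
by have := sqr_ge0 (be - 1 / 2); rewrite /b0 /t => *; apply/andP; split; lra.
Qed.

Let M_bounds : 0 <= t <= 2 -> 0 <= p4 <= p3 -> p3 <= ga <= eps -> 0 <= M <= 9 * eps.
Proof.
move=> /andP[t_ge0 t_le2] /andP[p4_ge0 p4_le] /andP[p3_le ga_le].
have : t * t * ga <= 2 * 2 * ga by apply: ler_wpM2r; [lra | apply: ler_pM].
have : t * p3 <= 2 * p3 by rewrite ler_wpM2r //; lra.
have : 0 <= t * t * ga by apply: mulr_ge0; [exact: mulr_ge0 | lra].
have : 0 <= t * p3 by rewrite mulr_ge0 //; lra.
by rewrite /M expr2 => *; apply/andP; split; lra.
Qed.

Let C_bounds : 0 <= t <= 2 -> 1 / 2 - eps <= be <= 1 -> 1 / 2 - eps <= b0 <= 1 ->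
  0 <= p3 <= ga -> ga <= eps -> 1 / 4 - 4 * eps <= C <= 1.
Proof.
move=> /andP[t_ge0 t_le2] /andP[be_ge be_le] /andP[b0_ge b0_le] /andP[p3_ge0 p3_le] ga_le.
have : (1 / 2 - eps) * (1 / 2 - eps) <= b0 * be by apply: ler_pM; lra.
have : b0 * be <= 1 * 1 by apply: ler_pM; lra.
have : t * ga <= 2 * ga by rewrite ler_wpM2r //; lra.
have : 0 <= t * ga by rewrite mulr_ge0 //; lra.
by rewrite /C => *; apply/andP; split; lra.
Qed.

Lemma gtilde_drift_arith : 0 < N -> 1 / 2 - eps <= be ->
  be * (2 * be - 1) - ga <= eps -> ga <= eps ->
  0 <= p4 -> p4 <= p3 -> p3 <= ga -> ga ^+ 2 <= be * p3 -> p3 ^+ 2 <= ga * p4 -> be <= N * ga ->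
  0 < N * b0 /\ forall EG, N ^+ 2 * M + N * C <= EG ->
    ga / be ^+ 2 + 1 / (12 * N) <= EG * ((N * b0 - 4) / (N * b0) ^+ 3).
Proof.
move=> N_gt0 be_ge psi_le ga_le p4_ge0 p4_le p3_le ga_CS p3_CS be_le_Nga.
have be_le := beta_le_of_psi psi_le ga_le.
have ga_gt0 : 0 < ga by rewrite -(pmulr_rgt0 _ N_gt0); lra.
have N_ge : 400 <= N by have := ler_wpM2l (ltW N_gt0) ga_le; lra.
have t_bounds : 0 <= t <= 2 by rewrite /t; apply/andP; split; lra.
have /andP[b0_ge b0_le] : 1 / 2 - eps <= b0 <= 1 / 2 + eps.
  by apply: b0_bounds; apply/andP; split; lra.
have M_bnd : 0 <= M <= 9 * eps by apply: M_bounds => //; apply/andP; split; lra.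
have C_bnd : 1 / 4 - 4 * eps <= C <= 1 by apply: C_bounds => //; apply/andP; split; lra.
have Nb0_ge : 400 * (1 / 2 - eps) <= N * b0 by apply: ler_pM; lra.
split=> [|EG EG_ge]; first lra.
apply: le_trans (_ : _ <= (N ^+ 2 * M + N * C) * ((N * b0 - 4) / (N * b0) ^+ 3)) _.
  have -> : (N ^+ 2 * M + N * C) * ((N * b0 - 4) / (N * b0) ^+ 3) =
            M / b0 ^+ 2 + (C * N * b0 - 4 * N * M - 4 * C) / (N ^+ 2 * b0 ^+ 3).
    by field; rewrite !gt_eqF //; lra.
  apply: lerD; last by apply: drift_correction_ge => //; apply/andP; split.
  have be_gt0 : 0 < be by lra.
  rewrite ler_pdivrMr ?exprn_gt0 // mulrAC ler_pdivlMr ?exprn_gt0 //; try lra.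
  by apply: Chebyshev_moments; rewrite /t; lra.
by rewrite ler_wpM2r // divr_ge0 ?exprn_ge0 //; lra.
Qed.

End Regime.
End DriftArithmetic.

Section USDStep.
Variables (R : realFieldType) (n k : nat) (c : {ffun 'I_n -> option 'I_k}).
Hypothesis n_gt0 : (0 < n)%N.
Implicit Types (f : {ffun 'I_n -> 'I_n}) (u v w x : 'I_n) (i j : 'I_k).

Local Notation a := (alpha R c).
Local Notation be := (beta R c).

Let n_neq0 : n%:R != 0 :> R. Proof. by rewrite pnatr_eq0 -lt0n. Qed.
Let I_n_gt0 : (0 < #|'I_n|)%N. Proof. by rewrite card_ord. Qed.

(* [count f i], [decided f] and [sqcount f] are n alpha_t(i), n beta_t and n^2 gamma_t for the
   step driven by [f]; [adopt_prob u i] is the probability that u holds i after the step. *)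
Definition holds i u : R := (c u == Some i)%:R.
Definition undecided u : R := (c u == None)%:R.
Definition adopts u i v : R := (usd_update (c u) (c v) == Some i)%:R.
Definition adopt_prob u i := avg (adopts u i).
Definition adopt_mass i := \sum_u adopt_prob u i.
Definition count f i := \sum_u adopts u i (f u).
Definition sqcount f := \sum_i count f i ^+ 2.
Definition decided f := \sum_i count f i.

Lemma sum_holds i : \sum_u holds i u = n%:R * a i.
Proof. by rewrite /alpha card_natr mulrC divfK. Qed.

Lemma holds_partition u : undecided u + \sum_i holds i u = 1.
Proof.
rewrite /undecided /holds; case: (c u) => [j|] /=; last by rewrite big1 ?addr0.
by rewrite add0r (eq_bigr (fun i => (i == j)%:R * 1)) ?sumr_delta // => i _; rewrite eq_sym mulr1.
Qed.

Lemma sum_undecided : \sum_u undecided u = n%:R * (1 - be).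
Proof.
have : \sum_u (undecided u + \sum_i holds i u) = \sum_(u < n) (1 : R).
  by apply: eq_bigr => u _; exact: holds_partition.
rewrite big_split /= exchange_big /= (eq_bigr _ (fun i _ => sum_holds i)) -mulr_sumr.
by rewrite sumr_const card_ord /beta; lra.
Qed.

Lemma undecided_holds_le1 u i : undecided u + holds i u <= 1.
Proof.
rewrite -(holds_partition u) lerD2l (bigD1 i) //= lerDl.
by apply: sumr_ge0 => j _; apply: ler0n.
Qed.

Lemma adoptsE u i v :
  adopts u i v = holds i u * (undecided v + holds i v) + undecided u * holds i v.
Proof.
rewrite /adopts /holds /undecided.
case: (c u) => [j|]; case: (c v) => [l|] /=; rewrite ?(inj_eq Some_inj).
- case: (eqVneq j l) => [<-|jl]; rewrite ?eqxx ?(negbTE jl) /= ?(inj_eq Some_inj).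
    by case: (j == i); rewrite /=; ring.
  case: (eqVneq j i) => [<-|_] /=; last by ring.
  by rewrite eq_sym (negbTE jl) /=; ring.
- by case: (j == i); rewrite /=; ring.
- by ring.
- by ring.
Qed.

Lemma adopts_le u i v : adopts u i v <= undecided v + holds i v.
Proof.
rewrite adoptsE; apply: le_trans (_ : _ <= (holds i u + undecided u) * (undecided v + holds i v)) _.
  by rewrite mulrDl lerD2l ler_wpM2l ?ler0n // lerDr ler0n.
by rewrite ler_piMl ?addr_ge0 ?ler0n // addrC undecided_holds_le1.
Qed.

Lemma adopts_mul u i j v : adopts u i v * adopts u j v = (i == j)%:R * adopts u i v.
Proof.
rewrite /adopts; case: (usd_update _ _) => [l|] /=; rewrite ?(inj_eq Some_inj) ?mulr0 //.
case: (eqVneq i j) => [<-|ij]; first by case: (l == i); rewrite /=; ring.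
by case: (eqVneq l i) => [->|_]; rewrite ?(negbTE ij) /=; ring.
Qed.

Lemma adopt_prob_ge0 u i : 0 <= adopt_prob u i.
Proof. by rewrite divr_ge0 ?sumr_ge0 // => v _; apply: ler0n. Qed.

Lemma adopt_probE u i : adopt_prob u i = holds i u * (1 - be + a i) + undecided u * a i.
Proof.
rewrite /adopt_prob /avg card_ord; under eq_bigr do rewrite adoptsE.
rewrite big_split /= -!mulr_sumr big_split /= sum_holds sum_undecided.
by field.
Qed.

Lemma adopt_prob_le u i : adopt_prob u i <= 1 - be + a i.
Proof.
have : \sum_v adopts u i v <= \sum_v (undecided v + holds i v).
  by apply: ler_sum => v _; exact: adopts_le.
rewrite big_split /= sum_undecided sum_holds /adopt_prob /avg card_ord => le_sum.
by rewrite ler_pdivrMr ?ltr0n //; lra.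
Qed.

Lemma adopt_massE i : adopt_mass i = n%:R * (a i * (2 * (1 - be) + a i)).
Proof.
rewrite /adopt_mass; under eq_bigr do rewrite adopt_probE.
by rewrite big_split /= -!mulr_suml sum_holds sum_undecided; ring.
Qed.

Lemma mean_adopts2 u w i :
  mean (fun f => adopts u i (f u) * adopts w i (f w)) =
  adopt_prob u i * adopt_prob w i + (u == w)%:R * (adopt_prob u i - adopt_prob u i ^+ 2).
Proof.
have [<-|uw] := eqVneq u w; last by rewrite (mean_indep2 I_n_gt0) //= mul0r addr0.
rewrite (eq_mean (Y := fun f => adopts u i (f u))) => [|f]; last by rewrite adopts_mul eqxx mul1r.
by rewrite (mean_point I_n_gt0) -/(adopt_prob u i) /=; ring.
Qed.

Lemma mean_sqcount_pairs : mean sqcount =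
  \sum_i \sum_u \sum_w mean (fun f => adopts u i (f u) * adopts w i (f w)).
Proof.
rewrite (eq_mean (Y := fun f => \sum_i \sum_u \sum_w adopts u i (f u) * adopts w i (f w))).
  by rewrite mean_sum; apply: eq_bigr => i _; rewrite mean_sum; under eq_bigr do rewrite mean_sum.
move=> f; apply: eq_bigr => i _; rewrite /count expr2 mulr_suml.
by apply: eq_bigr => u _; rewrite mulr_sumr.
Qed.

Lemma mean_sqcount :
  mean sqcount = \sum_i (adopt_mass i ^+ 2 + adopt_mass i - \sum_u adopt_prob u i ^+ 2).
Proof.
rewrite mean_sqcount_pairs; apply: eq_bigr => i _.
under eq_bigr do under eq_bigr do rewrite mean_adopts2.
under eq_bigr do rewrite big_split /= -mulr_sumr.
under eq_bigr do under [X in _ + X]eq_bigr do rewrite eq_sym.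
under eq_bigr do rewrite sumr_delta.
by rewrite big_split /= /adopt_mass expr2 mulr_suml sumrB addrA.
Qed.

Lemma mean_sqcount_ge :
  \sum_i (adopt_mass i ^+ 2 + adopt_mass i * (be - a i)) <= mean sqcount.
Proof.
rewrite mean_sqcount; apply: ler_sum => i _.
have : \sum_u adopt_prob u i ^+ 2 <= adopt_mass i * (1 - be + a i).
  rewrite /adopt_mass mulr_suml; apply: ler_sum => u _.
  by rewrite expr2 ler_wpM2l ?adopt_prob_ge0 ?adopt_prob_le.
lra.
Qed.

(* For x distinct from u and w the choice of x is independent of theirs; otherwise the third
   factor is at most [i == j] times one already present. *)
Lemma mean_adopts3_le u w x i j :
  mean (fun f => adopts u i (f u) * adopts w i (f w) * adopts x j (f x)) <=
  mean (fun f => adopts u i (f u) * adopts w i (f w)) *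
    (adopt_prob x j + (i == j)%:R * ((x == u)%:R + (x == w)%:R)).
Proof.
set E2 := mean (fun f => adopts u i (f u) * adopts w i (f w)).
have E2_ge0 : 0 <= E2 by apply: mean_ge0 => f; rewrite mulr_ge0 ?ler0n.
have diag_le y (b : bool) :
    (i == j)%:R * E2 <= E2 * (adopt_prob y j + (i == j)%:R * (1 + b%:R)).
  have := mulr_ge0 E2_ge0 (adopt_prob_ge0 y j).
  have := mulr_ge0 (mulr_ge0 E2_ge0 (ler0n _ (i == j))) (ler0n _ b).
  lra.
have [->|xu] := eqVneq x u.
  rewrite (eq_mean (Y := fun f => (i == j)%:R * (adopts u i (f u) * adopts w i (f w)))).
    by rewrite meanZ; apply: diag_le.
  by move=> f; rewrite mulrAC adopts_mul; ring.
have [->|xw] := eqVneq x w.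
  rewrite (eq_mean (Y := fun f => (i == j)%:R * (adopts u i (f u) * adopts w i (f w)))).
    by rewrite meanZ -/E2 (addrC false%:R); apply: diag_le.
  by move=> f; rewrite -mulrA adopts_mul; ring.
rewrite (mean_indep I_n_gt0) // -/E2 ler_wpM2l // lerDl.
by rewrite mulr_ge0 ?addr_ge0 ?ler0n.
Qed.

Lemma mean_sqcount_decided_le :
  mean (fun f => sqcount f * decided f) <= mean sqcount * (\sum_i adopt_mass i + 2).
Proof.
have bracket u w i : \sum_j \sum_x (adopt_prob x j + (i == j)%:R * ((x == u)%:R + (x == w)%:R)) =
                     \sum_i adopt_mass i + 2.
  under eq_bigr do rewrite big_split /= -mulr_sumr big_split /=.
  rewrite big_split /=; congr (_ + _).
  have delta1 (y : 'I_n) : \sum_x (x == y)%:R = 1 :> R.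
    by rewrite (eq_bigr (fun x => (x == y)%:R * 1)) ?sumr_delta // => x _; rewrite mulr1.
  by rewrite !delta1; under eq_bigr do rewrite eq_sym; rewrite sumr_delta.
rewrite (eq_mean (Y := fun f => \sum_i \sum_u \sum_w \sum_j \sum_x
                   adopts u i (f u) * adopts w i (f w) * adopts x j (f x))); last first.
  move=> f; rewrite /sqcount /decided mulr_suml; apply: eq_bigr => i _.
  rewrite /count expr2 -mulrA mulr_suml; apply: eq_bigr => u _.
  rewrite mulr_suml mulr_sumr; apply: eq_bigr => w _.
  rewrite !mulr_sumr; apply: eq_bigr => j _.
  by rewrite !mulr_sumr; apply: eq_bigr => x _; rewrite mulrA.
rewrite mean_sqcount_pairs mulr_suml mean_sum; apply: ler_sum => i _.
rewrite mulr_suml mean_sum; apply: ler_sum => u _.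
rewrite mulr_suml mean_sum; apply: ler_sum => w _.
rewrite -(bracket u w i) mulr_sumr mean_sum; apply: ler_sum => j _.
rewrite mulr_sumr mean_sum; apply: ler_sum => x _.
exact: mean_adopts3_le.
Qed.

Lemma alpha_step f i : alpha R (usd_step c f) i = count f i / n%:R.
Proof. by rewrite /alpha card_natr; congr (_ / _); apply: eq_bigr => u _; rewrite ffunE. Qed.

Lemma gtilde_step_ge f y : 0 < y ->
  sqcount f * (3 / y ^+ 2 - 2 * decided f / y ^+ 3) <= gtilde R (usd_step c f).
Proof.
move=> y_gt0; have count_ge0 i : 0 <= count f i by apply: sumr_ge0 => u _; apply: ler0n.
rewrite /gtilde.
have -> : beta R (usd_step c f) = decided f / n%:R.
  by rewrite /beta /decided mulr_suml; apply: eq_bigr => i _; rewrite alpha_step.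
have -> : gamma R (usd_step c f) = sqcount f / n%:R ^+ 2.
  by rewrite /gamma /sqcount mulr_suml; apply: eq_bigr => i _; rewrite alpha_step expr_div_n.
rewrite mulf_eq0 invr_eq0 (negbTE n_neq0) orbF.
have [B0|Bn0] := eqVneq (decided f) 0.
  have /psumr_eq0P count0 := B0; rewrite /sqcount big1 ?mul0r // => i _.
  by rewrite count0 ?expr0n.
have -> : sqcount f / n%:R ^+ 2 / (decided f / n%:R) ^+ 2 = sqcount f * (decided f ^+ 2)^-1.
  by field; rewrite Bn0 n_neq0.
have B_gt0 : 0 < decided f by rewrite lt_def Bn0 sumr_ge0.
by rewrite ler_wpM2l ?invr_sqr_tangent // sumr_ge0 // => i _; apply: sqr_ge0.
Qed.

Lemma mean_gtilde_ge : 0 < \sum_i adopt_mass i ->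
  mean sqcount * ((\sum_i adopt_mass i - 4) / (\sum_i adopt_mass i) ^+ 3) <=
  usd_expect c (@gtilde R n k).
Proof.
set y := \sum_i adopt_mass i => y_gt0.
have -> : usd_expect c (@gtilde R n k) = mean (fun f => gtilde R (usd_step c f)).
  by rewrite /usd_expect /mean card_ffun !card_ord.
apply: le_trans (ler_mean (fun f => gtilde_step_ge f y_gt0)).
rewrite [X in _ <= X](eq_mean (Y := fun f => 3 / y ^+ 2 * sqcount f - 2 / y ^+ 3 * (sqcount f * decided f))).
  have -> : mean sqcount * ((y - 4) / y ^+ 3) =
            3 / y ^+ 2 * mean sqcount - 2 / y ^+ 3 * (mean sqcount * (y + 2)).
    by field; rewrite gt_eqF.
  rewrite meanB !meanZ lerD2l lerN2 ler_wpM2l ?mean_sqcount_decided_le //.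
  by rewrite divr_ge0 ?exprn_ge0 ?ltW.
by move=> f /=; ring.
Qed.

Lemma alpha_ge0 i : 0 <= a i.
Proof. by rewrite divr_ge0 ?ler0n. Qed.

Lemma alpha_le1 i : a i <= 1.
Proof.
have : 0 <= n%:R * (1 - be) by rewrite -sum_undecided sumr_ge0 // => u _; apply: ler0n.
rewrite pmulr_rge0 ?ltr0n // subr_ge0; apply: le_trans.
by rewrite /beta (bigD1 i) //= lerDl sumr_ge0 // => j _; apply: alpha_ge0.
Qed.

Lemma beta_le_n_gamma : be <= n%:R * gamma R c.
Proof.
rewrite /beta /gamma mulr_sumr; apply: ler_sum => i _; rewrite /alpha.
set m := #|_|.
have -> : n%:R * (m%:R / n%:R) ^+ 2 = m%:R ^+ 2 / n%:R :> R by field.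
rewrite ler_wpM2r ?invr_ge0 ?ler0n // -natrX ler_nat.
by case: m => // m; rewrite expnS leq_pmulr ?expn_gt0.
Qed.

Local Notation t := (2 * (1 - be)).
Local Notation ga := (gamma R c).
Local Notation p3 := (\sum_i a i ^+ 3).
Local Notation p4 := (\sum_i a i ^+ 4).

Lemma sum_adopt_mass : \sum_i adopt_mass i = n%:R * (t * be + ga).
Proof.
under eq_bigr do rewrite adopt_massE.
rewrite -mulr_sumr (eq_bigr (fun i => t * a i + a i ^+ 2)) => [|i _]; last by ring.
by rewrite big_split /= -mulr_sumr.
Qed.

Lemma mean_sqcount_ge_moments :
  n%:R ^+ 2 * (t ^+ 2 * ga + 2 * t * p3 + p4) + n%:R * ((t * be + ga) * be - t * ga - p3) <=
  mean sqcount.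
Proof.
apply: le_trans mean_sqcount_ge.
rewrite [X in _ <= X](eq_bigr (fun i => n%:R * t * be * a i + (n%:R ^+ 2 * t ^+ 2 + n%:R * (be - t)) * a i ^+ 2
  + (2 * n%:R ^+ 2 * t - n%:R) * a i ^+ 3 + n%:R ^+ 2 * a i ^+ 4)) => [|i _]; last first.
  by rewrite adopt_massE; ring.
rewrite !big_split /= -!mulr_sumr -/(beta R c) -/(gamma R c).
by rewrite le_eqVlt; apply/predU1P; left; ring.
Qed.

End USDStep.

Theorem mainTheorem9 (R : realFieldType) :
  exists eps0 : R, 0 < eps0 /\
  forall (n k : nat) (c : {ffun 'I_n -> option 'I_k}),
    1 / 2 - eps0 <= beta R c ->
    psi R c <= eps0 ->
    gamma R c <= eps0 ->
    gtilde R c + 1 / (12 * n%:R) <= usd_expect c (@gtilde R n k).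
Proof.
exists (1 / 10 ^+ 3); split=> [|n k c be_ge psi_le ga_le]; first by rewrite divr_gt0 ?exprn_gt0.
have n_gt0 : (0 < n)%N.
  rewrite lt0n; apply/eqP => n0; move: be_ge; rewrite /beta big1 => [|i _]; first lra.
  by rewrite /alpha (_ : n%:R = 0) ?n0 // invr0 mulr0.
have a01 i : 0 <= alpha R c i <= 1 by rewrite alpha_ge0 (alpha_le1 R c n_gt0).
have a_ge0 i : 0 <= alpha R c i by apply: alpha_ge0.
have beta1 : beta R c = \sum_i alpha R c i ^+ 1 by apply: eq_bigr => i _; rewrite expr1.
have ga_CS := moment_CauchySchwarz 1 a_ge0; rewrite -beta1 in ga_CS.
have N_gt0 : 0 < n%:R :> R by rewrite ltr0n.
have p4_ge0 : 0 <= \sum_i alpha R c i ^+ 4 by apply: sumr_ge0 => i _; apply: exprn_ge0.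
have [Nb0_gt0 drift] := gtilde_drift_arith N_gt0 be_ge psi_le ga_le p4_ge0 (moment_le 3 a01)
  (moment_le 2 a01) ga_CS (moment_CauchySchwarz 2 a_ge0) (beta_le_n_gamma R c n_gt0).
have be_gt0 : 0 < beta R c by lra.
rewrite /gtilde gt_eqF //; apply: le_trans (drift _ (mean_sqcount_ge_moments R c n_gt0)) _.
rewrite -(sum_adopt_mass R c n_gt0) in Nb0_gt0 *.
exact: mean_gtilde_ge.
Qed.
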